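(* Fix a finite extensive-form game with perfect recall and any sequence of joint normal-form plans $\pi^1,\dots,\pi^T\in\Pi$. Then the empirical frequency of play $\bar\mu^T$ satisfies \[ \delta(\bar\mu^T)=\max_{i\in\mathcal P}\ \max_{\sigma=(I,a)\in\Sigma_i\setminus\{\varnothing_i\}}\frac{R^T_\sigma}{T}. \] Consequently, $\bar\mu^T$ is an $\epsilon$-EFCE with $\epsilon=\max_{i\in\mathcal P}\max_{\sigma}R^T_\sigma/T$. That is, for every player $i$, every $\sigma=(I,a)$ and every $\hat\mu_i\in\Delta_{\Pi_i(I)}$, \[ \sum_{z\in Z(I,a)}q_{\bar\mu^T}(z)u_i(z)\ \ge\ \sum_{z\in Z(I)}p^\sigma_{\bar\mu^T,\hat\mu_i}(z)u_i(z)-\epsilon . \]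
   Context: Setting: a finite extensive-form game (game tree) with a set of players $\mathcal P$ and a chance player $c$ with fixed known action probabilities. $Z$ is the set of terminal nodes (leaves), $u_i:Z\to\mathbb R$ is player $i$'s payoff, and $p_c(z)$ is the product of chance probabilities along the root-to-$z$ path. $\mathcal I_i$ is the set of information sets (infosets) of player $i\in\mathcal P$; $A(I)$ is the action set at $I$. The game has perfect recall: all nodes of an infoset $I\in\mathcal I_i$ have the same ordered list of player-$i$ (infoset, action) pairs on their root paths. For $I,J\in\mathcal I_i$, write $I\preceq J$ if some path in the tree goes from a node of $I$ to a node of $J$ (with $I\preceq I$). A normal-form plan is $\pi_i\in\Pi_i=\prod_{I\in\mathcal I_i}A(I)$. Write $\Pi=\prod_{i\in\mathcal P}\Pi_i$ and $\Pi_{-i}=\prod_{j\ne i}\Pi_j$. The sequences of player $i$ are $\Sigma_i=\{(I,a):I\in\mathcal I_i,a\in A(I)\}\cup\{\varnothing_i\}$. $\Pi_i(I)$ is the set of plans $\pi_i$ with $\pi_i(J)=b$ for every player-$i$ pair $(J,b)$ on the root path to $I$. Also $\Pi_i((I,a))=\{\pi_i\in\Pi_i(I):\pi_i(I)=a\}$ and $\Pi_i(\varnothing_i)=\Pi_i$. For $z\in Z$, $\Pi_i(z)$ is the set of plans choosing, at every player-$i$ infoset visited on the root path to $z$, the action taken on that path. Then $\Pi(z)=\prod_i\Pi_i(z)$ and $\Pi_{-i}(z)=\prod_{j\neq i}\Pi_j(z)$. $Z(I)$ is the set of terminal nodes below nodes of $I$; $Z(I,a)\subseteq Z(I)$ consists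 of those whose path takes $a$ at $I$. $\mathcal C(I,a)$ is the set of player-$i$ infosets reachable from a node of $I$ by a path starting with $a$ and not passing through another player-$i$ infoset. Immediate utilities at round $t$: $u_i^t[I,a]=\sum_{z\in Z(I,a)\setminus\bigcup_{J\in\mathcal C(I,a)}Z(J)}\mathbb 1[\pi^t_{-i}\in\Pi_{-i}(z)]\,p_c(z)u_i(z)$. Values: $V_I^t(\pi_i)=u_i^t[I,\pi_i(I)]+\sum_{J\in\mathcal C(I,\pi_i(I))}V_J^t(\pi_i)$, defined recursively. Trigger regret for $\sigma=(I,a)$: $R^T_\sigma=\max_{\hat\pi_i\in\Pi_i(I)}\sum_{t=1}^T\mathbb 1[\pi_i^t\in\Pi_i(\sigma)]\big(V_I^t(\hat\pi_i)-V_I^t(\pi_i^t)\big)$. Empirical frequency: $\bar\mu^T(\pi)=|\{t\le T:\pi^t=\pi\}|/T$. For $\mu\in\Delta_\Pi$, $\sigma=(I,a)$, $\hat\mu_i\in\Delta_{\Pi_i(I)}$, $z\in Z(I)$: \[ p^\sigma_{\mu,\hat\mu_i}(z)=\Big(\sum_{\pi_i\in\Pi_i(\sigma),\,\pi_{-i}\in\Pi_{-i}(z)}\mu(\pi_i,\pi_{-i})\Big)\Big(\sum_{\hat\pi_i\in\Pi_i(z)}\hat\mu_i(\hat\pi_i)\Big)p_c(z), \] and $q_\mu(z)=\big(\sum_{\pi\in\Pi(z)}\mu(\pi)\big)p_c(z)$. Maximum deviation: \[ \delta(\mu)=\max_{i\in\mathcal P}\max_{\sigma=(I,a)}\Big\{\max_{\hat\mu_i\in\Delta_{\Pi_i(I)}}\sum_{z\in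 Z(I)}p^\sigma_{\mu,\hat\mu_i}(z)u_i(z)-\sum_{z\in Z(I,a)}q_\mu(z)u_i(z)\Big\}. \] An EFCE is a $\mu$ with $\delta(\mu)\le 0$; an $\epsilon$-EFCE is a $\mu$ with $\delta(\mu)\le\epsilon$. *)

From HB Require Import structures.
From mathcomp Require Import all_boot all_order all_algebra.
From mathcomp Require Import classical_sets reals.
Set Implicit Arguments. Unset Strict Implicit. Unset Printing Implicit Defensive.
Import Order.TTheory GRing.Theory Num.Theory.
Local Open Scope ring_scope.
Local Open Scope classical_set_scope.

(* A finite game tree: leaves carry the payoff vector, chance nodes carry a
   list of (probability, subtree) branches, decision nodes carry their
   information set and a list of (action, subtree) branches. *)
Inductive gtree (Player Info Act R : Type) :=
| Leaf of (Player -> R)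
| Chance of seq (R * gtree Player Info Act R)
| Dec of Info & seq (Act * gtree Player Info Act R).
Arguments Leaf {Player Info Act R}.
Arguments Chance {Player Info Act R}.
Arguments Dec {Player Info Act R}.

Section Game.
Variables (R : realType) (Player Info Act : finType).
Variable (owner : Info -> Player).
Variable (A : Info -> {set Act}).

(* terminal node z: the ordered list of (infoset, action) decisions on the
   root-to-z path (root first), the chance reach probability p_c(z), and
   the payoff vector u(z). *)
Record leaf := Mkleaf { hist : seq (Info * Act); pc : R; pay : Player -> R }.

Fixpoint leaves (t : gtree Player Info Act R) : seq leaf :=
  match t with
  | Leaf u => [:: Mkleaf [::] 1 u]
  | Chance cs => flatten [seq [seq Mkleaf (hist z) (c.1 * pc z) (pay z)
                              | z <- leaves c.2] | c <- cs]
  | Dec I0 cs => flatten [seq [seq Mkleaf ((I0, c.1) :: hist z) (pc z) (pay z)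
                              | z <- leaves c.2] | c <- cs]
  end.

(* decision nodes: (infoset of the node, decisions on the root path to it). *)
Fixpoint dnodes (t : gtree Player Info Act R) : seq (Info * seq (Info * Act)) :=
  match t with
  | Leaf _ => [::]
  | Chance cs => flatten [seq dnodes c.2 | c <- cs]
  | Dec I0 cs => (I0, [::]) :: flatten [seq [seq (n.1, (I0, c.1) :: n.2)
                                          | n <- dnodes c.2] | c <- cs]
  end.

Fixpoint wf_tree (t : gtree Player Info Act R) : bool :=
  match t with
  | Leaf _ => true
  | Chance cs => all (fun c => 0 <= c.1) cs && (\sum_(c <- cs) c.1 == 1)
                 && all (fun c => wf_tree c.2) cs
  | Dec I0 cs => perm_eq [seq c.1 | c <- cs] (enum (A I0))
                && all (fun c => wf_tree c.2) cs
  end.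

Definition perfect_recall (t : gtree Player Info Act R) : Prop :=
  forall n1 n2, n1 \in dnodes t -> n2 \in dnodes t -> n1.1 = n2.1 ->
    [seq p <- n1.2 | owner p.1 == owner n1.1]
    = [seq p <- n2.2 | owner p.1 == owner n2.1].

Definition infosets_nonempty (t : gtree Player Info Act R) : Prop :=
  forall I, has (fun n => n.1 == I) (dnodes t).

(* joint normal-form plans Pi = prod_i Pi_i, represented as one action per
   infoset (infosets are partitioned among the players by [owner]). *)
Definition jplan := {f : {ffun Info -> Act} | [forall I, f I \in A I]}.

Definition infos (i : Player) := {I : Info | owner I == i}.
Definition iplan (i : Player) :=
  {f : {ffun infos i -> Act} | [forall J, f J \in A (val J)]}.

Definition restr (i : Player) (p : jplan) : {ffun infos i -> Act} :=
  [ffun J => val p (val J)].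

Section Tree.
Variable t : gtree Player Info Act R.

Definition consistent (i : Player) (f : {ffun infos i -> Act})
    (h : seq (Info * Act)) : bool :=
  [forall J : infos i, forall b : Act, ((val J, b) \in h) ==> (f J == b)].

Definition PiI (i : Player) (f : {ffun infos i -> Act}) (I : infos i) : bool :=
  all (fun n => (n.1 == val I) ==> consistent f n.2) (dnodes t).
Definition Pisig (i : Player) (f : {ffun infos i -> Act}) (I : infos i) (a : Act)
  : bool := PiI f I && (f I == a).
Definition Piz (i : Player) (f : {ffun infos i -> Act}) (z : leaf) : bool :=
  consistent f (hist z).
Definition Pimiz (i : Player) (p : jplan) (z : leaf) : bool :=
  [forall J : Info, forall b : Act,
     ((owner J != i) && ((J, b) \in hist z)) ==> (val p J == b)].
Definition Pijz (p : jplan) (z : leaf) : bool :=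
  [forall J : Info, forall b : Act, ((J, b) \in hist z) ==> (val p J == b)].

Definition inZ (I : Info) (z : leaf) : bool := has (fun q => q.1 == I) (hist z).
Definition inZa (I : Info) (a : Act) (z : leaf) : bool := (I, a) \in hist z.

Fixpoint direct_after (i : Player) (I : Info) (a : Act) (h : seq (Info * Act))
  : bool :=
  match h with
  | [::] => false
  | q :: h' => ((q == (I, a)) && all (fun r => owner r.1 != i) h')
               || direct_after i I a h'
  end.

Definition inC (i : Player) (I : infos i) (a : Act) (J : infos i) : bool :=
  has (fun n => (n.1 == val J) && direct_after i (val I) a n.2) (dnodes t).

Definition uimm (i : Player) (pt : jplan) (I : infos i) (a : Act) : R :=
  \sum_(z <- leaves t | inZa (val I) a z
                        && ~~ [exists J : infos i, inC I a J && inZ (val J) z])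
     (Pimiz i pt z)%:R * pc z * pay z i.

(* V_I^t(pi_i), defined by the recursion of the paper; the recursion along
   C(.,.) has depth at most #|Info|, which is used as fuel. *)
Fixpoint Vfuel (n : nat) (i : Player) (pt : jplan) (I : infos i)
    (f : {ffun infos i -> Act}) : R :=
  match n with
  | 0 => 0
  | n'.+1 => uimm pt I (f I)
             + \sum_(J : infos i | inC I (f I) J) Vfuel n' pt J f
  end.
Definition V (i : Player) (pt : jplan) (I : infos i) (f : {ffun infos i -> Act})
  : R := Vfuel #|Info| pt I f.

Definition regret (T : nat) (pi : 'I_T -> jplan) (i : Player) (I : infos i)
    (a : Act) : R :=
  sup [set x | exists g : iplan i, PiI (val g) I /\
        x = \sum_(s < T) (Pisig (restr i (pi s)) I a)%:R
                         * (V (pi s) I (val g) - V (pi s) I (restr i (pi s)))].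

Definition empfreq (T : nat) (pi : 'I_T -> jplan) : {ffun jplan -> R} :=
  [ffun p => #|[set s | pi s == p]|%:R / T%:R].

Definition is_dist (X : finType) (m : {ffun X -> R}) : Prop :=
  (forall x, 0 <= m x) /\ \sum_x m x = 1.

Definition is_idist (i : Player) (I : infos i) (m : {ffun iplan i -> R}) : Prop :=
  is_dist m /\ forall g, m g != 0 -> PiI (val g) I.

Definition p_sig (mu : {ffun jplan -> R}) (i : Player) (I : infos i) (a : Act)
    (mh : {ffun iplan i -> R}) (z : leaf) : R :=
  (\sum_(p : jplan | Pisig (restr i p) I a && Pimiz i p z) mu p)
  * (\sum_(g : iplan i | Piz (val g) z) mh g) * pc z.

Definition q_mu (mu : {ffun jplan -> R}) (z : leaf) : R :=
  (\sum_(p : jplan | Pijz p z) mu p) * pc z.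

Definition deviation (mu : {ffun jplan -> R}) (i : Player) (I : infos i) (a : Act)
    (mh : {ffun iplan i -> R}) : R :=
  \sum_(z <- leaves t | inZ (val I) z) p_sig mu I a mh z * pay z i
  - \sum_(z <- leaves t | inZa (val I) a z) q_mu mu z * pay z i.

Definition delta (mu : {ffun jplan -> R}) : R :=
  sup [set x | exists (i : Player) (I : infos i) (a : Act) (mh : {ffun iplan i -> R}),
        [/\ a \in A (val I), is_idist I mh & x = deviation mu I a mh]].

Definition max_avg_regret (T : nat) (pi : 'I_T -> jplan) : R :=
  sup [set x | exists (i : Player) (I : infos i) (a : Act),
        a \in A (val I) /\ x = regret pi I a / T%:R].

End Tree.
End Game.

From HB Require Import structures.
From mathcomp Require Import all_boot all_order all_algebra.
From mathcomp Require Import reals.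
From Stdlib Require List.
From mathcomp Require Import zify ring lra.
Import Order.TTheory GRing.Theory Num.Theory.
Set Implicit Arguments. Unset Strict Implicit. Unset Printing Implicit Defensive.
Local Open Scope ring_scope.

(* Fix a player i and a trigger sequence sigma = (I,a).  The whole proof
   rests on one identity: for a plan f of player i consistent with the
   path to I, the recursively defined value V_I(f) equals the total
   chance-weighted payoff of the leaves below I that f reaches
   ([V_leaf_sum]).  The recursion unfolds along the sets C(I,a), and perfect
   recall is exactly what makes it a partition of the leaves (the subtrees
   Z(J), J in C(I,a), are disjoint and lie below (I,a)) and makes the fuel
   #|Info| of [V] sufficient (a path never revisits an infoset).

   With this identity, the deviation of the empirical frequency against a
   distribution mh on Pi_i(I) unfolds to (1/T) sum_g mh(g) Gain(g), where
   Gain(g) is the summand of the trigger regret for the deviation plan g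
   ([deviation_empfreq]).  Hence each deviation is at most R_sigma/T, with
   equality for the point mass on a maximizing plan, and taking the
   maximum over (i, I, a) gives delta = max R_sigma / T. *)

(* Membership in a list, in the propositional form needed for leaves (whose
   payoff functions carry no decidable equality). *)
Lemma In_mem (T : eqType) (x : T) (s : seq T) : x \in s <-> List.In x s.
Proof.
elim: s => [|y s IH] //=; rewrite in_cons; split.
- by case/orP => [/eqP ->|/IH]; [left|right].
- by case=> [->|/IH ->]; rewrite ?eqxx ?orbT.
Qed.

Lemma mem_splitP (T : eqType) (x : T) (s : seq T) : x \in s ->
  exists s1 s2, s = s1 ++ x :: s2.
Proof. by case/splitPr => s1 s2; exists s1, s2. Qed.

Lemma cat_cons_lt (T : Type) (u1 u2 r1 r2 : seq T) x1 x2 :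
  u1 ++ x1 :: r1 = u2 ++ x2 :: r2 -> (size u1 < size u2)%N ->
  exists m, u2 = u1 ++ x1 :: m.
Proof.
elim: u1 u2 => [|a u1 IH] [|b u2] //=; first by case=> -> _ _; exists u2.
by case=> -> /IH H /H [m ->]; exists m.
Qed.

Lemma cat_cons_eq (T : Type) (u1 u2 r1 r2 : seq T) x1 x2 :
  u1 ++ x1 :: r1 = u2 ++ x2 :: r2 -> size u1 = size u2 -> x1 = x2.
Proof.
elim: u1 u2 => [|a u1 IH] [|b u2] //=; first by case.
by case=> _ /IH H [] /H.
Qed.

Lemma uniq_fst (X Y : eqType) (s : seq (X * Y)) x b b' :
  uniq (map fst s) -> (x, b) \in s -> (x, b') \in s -> b = b'.
Proof.
elim: s => [|[x0 y0] s IH] //= /andP [Hn Hu]; rewrite !in_cons.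
case/orP => [/eqP [E1 E2]|H1]; case/orP => [/eqP [E3 E4]|H2].
- by rewrite E2 E4.
- by move: Hn; rewrite -E1 (map_f fst H2).
- by move: Hn; rewrite -E3 (map_f fst H1).
- exact: IH.
Qed.

(* Sums over a list only depend on the summand on the members of the list
   (stated with [List.In], for lists without decidable equality). *)
Lemma eq_big_In (V : nmodType) (T : Type) (s : seq T) (F G : T -> V) :
  (forall x, List.In x s -> F x = G x) -> \sum_(x <- s) F x = \sum_(x <- s) G x.
Proof.
elim: s => [|x s IH] H; first by rewrite !big_nil.
by rewrite !big_cons H; [rewrite IH // => y Hy; apply: H; right|left].
Qed.

Lemma natr_andb (R : pzSemiRingType) (a b : bool) : (a && b)%:R = a%:R * b%:R :> R.
Proof. by rewrite -mulnb natrM. Qed.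

Lemma big_indicator (R : pzSemiRingType) (X : Type) (s : seq X) (P : pred X) (F : X -> R) :
  \sum_(x <- s | P x) F x = \sum_(x <- s) (P x)%:R * F x.
Proof. by rewrite big_mkcond; apply: eq_bigr => x _; case: (P x); rewrite ?mul1r ?mul0r. Qed.

Section GtreeInd.
Variables (Player Info Act R : Type) (P : gtree Player Info Act R -> Prop).
Hypotheses (HL : forall u, P (Leaf u))
  (HC : forall cs, (forall c, List.In c cs -> P c.2) -> P (Chance cs))
  (HD : forall I cs, (forall c, List.In c cs -> P c.2) -> P (Dec I cs)).

Fixpoint gtree_deep_ind (t : gtree Player Info Act R) : P t :=
  let branches := fun (X : Type) =>
    fix F (l : seq (X * gtree Player Info Act R)) :
        forall c, List.In c l -> P c.2 :=
      match l with
      | [::] => fun c H => False_ind _ H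
      | (x, t0) :: l' => fun c H =>
          match H with
          | or_introl E => eq_ind (x, t0) (fun c => P c.2) (gtree_deep_ind t0) c E
          | or_intror H' => F l' c H'
          end
      end in
  match t with
  | Leaf u => HL u
  | Chance cs => HC (branches R cs)
  | Dec I0 cs => HD I0 (branches Act cs)
  end.
End GtreeInd.

Section TreePaths.
Variables (R : realType) (Player Info Act : finType) (A : Info -> {set Act}).
Notation gt := (gtree Player Info Act R).
Notation lf := (leaf R Player Info Act).

Lemma In_leaves_Chance (cs : seq (R * gt)) (z : lf) :
  List.In z (leaves (Chance cs)) ->
  exists c z', [/\ List.In c cs, List.In z' (leaves c.2) & hist z = hist z'].
Proof.
move=> /List.in_concat [s [/List.in_map_iff [c [<- Hc]] /List.in_map_iff [z' [<- Hz']]]].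
by exists c, z'.
Qed.

Lemma In_leaves_Dec I0 (cs : seq (Act * gt)) (z : lf) :
  List.In z (leaves (Dec I0 cs)) ->
  exists c z', [/\ List.In c cs, List.In z' (leaves c.2)
                 & hist z = (I0, c.1) :: hist z'].
Proof.
move=> /List.in_concat [s [/List.in_map_iff [c [<- Hc]] /List.in_map_iff [z' [<- Hz']]]].
by exists c, z'.
Qed.

Lemma In_dnodes_Chance (cs : seq (R * gt)) n :
  List.In n (dnodes (Chance cs)) <-> exists c, List.In c cs /\ List.In n (dnodes c.2).
Proof.
rewrite /= List.in_concat; split.
- by case=> s [/List.in_map_iff [c [<- Hc]] Hn]; exists c.
- by case=> c [Hc Hn]; exists (dnodes c.2); split=> //; apply/List.in_map_iff; exists c.
Qed.

Lemma In_dnodes_Dec I0 (cs : seq (Act * gt)) n :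
  List.In n (dnodes (Dec I0 cs)) <->
  n = (I0, [::]) \/ exists c n', [/\ List.In c cs, List.In n' (dnodes c.2)
                                   & n = (n'.1, (I0, c.1) :: n'.2)].
Proof.
rewrite /= List.in_concat; split.
- case=> [<-|]; first by left.
  case=> s [/List.in_map_iff [c [<- Hc]] /List.in_map_iff [n' [<- Hn']]].
  by right; exists c, n'.
- case=> [->|[c [n' [Hc Hn' ->]]]]; first by left.
  right; exists [seq (n.1, (I0, c.1) :: n.2) | n <- dnodes c.2]; split.
    by apply/List.in_map_iff; exists c.
  by apply/List.in_map_iff; exists n'.
Qed.

Lemma leaves_prefix (t : gt) (z : lf) : List.In z (leaves t) ->
  forall h1 I a h2, hist z = h1 ++ (I, a) :: h2 -> List.In (I, h1) (dnodes t).
Proof.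
elim/gtree_deep_ind: t z.
- by move=> u z /= [<-|[]] [] //.
- move=> cs IH z /In_leaves_Chance [c [z' [Hc Hz' Eh]]] h1 I a h2 E.
  apply/In_dnodes_Chance; exists c; split=> //.
  by apply: (IH c Hc z' Hz' h1 I a h2); rewrite -Eh.
- move=> I0 cs IH z /In_leaves_Dec [c [z' [Hc Hz' ->]]] [|x h1] I a h2.
    by case=> -> _ _; apply/In_dnodes_Dec; left.
  case=> <- E; apply/In_dnodes_Dec; right; exists c, (I, h1); split=> //.
  exact: (IH c Hc z' Hz' h1 I a h2).
Qed.

Lemma dnodes_prefix (t : gt) n : List.In n (dnodes t) ->
  forall h1 I a h2, n.2 = h1 ++ (I, a) :: h2 -> List.In (I, h1) (dnodes t).
Proof.
elim/gtree_deep_ind: t n => [//||].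
- move=> cs IH n /In_dnodes_Chance [c [Hc Hn]] h1 I a h2 E.
  by apply/In_dnodes_Chance; exists c; split=> //; apply: (IH c Hc n Hn h1 I a h2).
- move=> I0 cs IH n /In_dnodes_Dec [->|[c [n' [Hc Hn' ->]]]] [|x h1] I a h2 //=.
    by case=> -> _ _; apply/In_dnodes_Dec; left.
  case=> <- E; apply/In_dnodes_Dec; right; exists c, (I, h1); split=> //.
  exact: (IH c Hc n' Hn' h1 I a h2).
Qed.

Lemma dnodes_actions (t : gt) n : wf_tree A t -> List.In n (dnodes t) ->
  forall J b, List.In (J, b) n.2 -> b \in A J.
Proof.
have all_In (T : Type) (p : pred T) s x : all p s -> List.In x s -> p x.
  by elim: s => //= y s IH /andP [py ps] [<-|/IH]; auto.
elim/gtree_deep_ind: t n => [//||].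
- move=> cs IH n /= /andP [_ Hall] /In_dnodes_Chance [c [Hc Hn]].
  exact: (IH c Hc n (all_In _ _ _ _ Hall Hc) Hn).
- move=> I0 cs IH n /= /andP [Hperm Hall].
  case/In_dnodes_Dec => [->|[c [n' [Hc Hn' ->]]]] //= J b.
  case=> [[<- <-]|HJ]; last exact: (IH c Hc n' (all_In _ _ _ _ Hall Hc) Hn').
  have /In_mem : List.In c.1 [seq c.1 | c <- cs] by exact: List.in_map.
  by rewrite (perm_mem Hperm) mem_enum.
Qed.
End TreePaths.

Lemma sup_eq_max (R : realType) (E : classical_sets.set R) x :
  E x -> (forall y, E y -> y <= x) -> sup E = x.
Proof.
move=> Ex Hub; apply/eqP; rewrite eq_le; apply/andP; split.
  by apply: ge_sup; [exists x|].
by apply: ub_le_sup => //; exists x.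
Qed.

Section PerfectRecallGame.
Variables (R : realType) (Player Info Act : finType) (owner : Info -> Player)
  (A : Info -> {set Act}) (t : gtree Player Info Act R).
Hypotheses (HA : forall I, A I != set0) (Hwf : wf_tree A t)
  (Hne : infosets_nonempty t) (Hpr : perfect_recall owner t).
Notation lf := (leaf R Player Info Act).

Definition owned (i : Player) (h : seq (Info * Act)) := [seq p <- h | owner p.1 == i].
Definition node (n : Info * seq (Info * Act)) := List.In n (dnodes t).

Lemma recall I h1 h2 : node (I, h1) -> node (I, h2) ->
  owned (owner I) h1 = owned (owner I) h2.
Proof.
move=> H1 H2; have := Hpr (n1 := (I, h1)) (n2 := (I, h2)).
by rewrite !In_mem; apply.
Qed.

Lemma owned_cat i h1 h2 : owned i (h1 ++ h2) = owned i h1 ++ owned i h2.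
Proof. exact: filter_cat. Qed.

Lemma owned_cons i x h : owner x.1 = i -> owned i (x :: h) = x :: owned i h.
Proof. by move=> H; rewrite /owned /= H eqxx. Qed.

(* A path never passes twice through the same infoset: otherwise the two
   nodes would have owned histories of different lengths. *)
Lemma no_revisit I h : node (I, h) -> forall h1 b h2, h <> h1 ++ (I, b) :: h2.
Proof.
move=> Hn h1 b h2 E.
have Hn1 : node (I, h1) by apply: (dnodes_prefix Hn); exact: E.
have := recall Hn1 Hn; rewrite E owned_cat owned_cons //.
move/(congr1 size); rewrite size_cat /=; lia.
Qed.

Lemma infoset_not_revisited I h b : node (I, h) -> (I, b) \notin h.
Proof. by move=> Hn; apply/negP => /mem_splitP [h1 [h2 /(no_revisit Hn)]]. Qed.

Lemma last_owned i h : owned i h != [::] ->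
  exists h1 x h2, [/\ h = h1 ++ x :: h2, owner x.1 = i & owned i h2 = [::]].
Proof.
elim/last_ind: h => [|h x IH] //; rewrite /owned filter_rcons.
case: ifP => /eqP Hx.
  by move=> _; exists h, x, [::]; rewrite cats1; split.
move=> /IH [h1 [y [h2 [E Hy H2]]]].
exists h1, y, (rcons h2 x); split=> //; first by rewrite E rcons_cat.
by move: H2; rewrite /owned filter_rcons; case: ifP => // /eqP.
Qed.

Lemma first_owned i h : owned i h != [::] ->
  exists h1 x h2, [/\ h = h1 ++ x :: h2, owner x.1 = i & owned i h1 = [::]].
Proof.
elim: h => [|x h IH] //; rewrite /owned /=.
case: ifP => /eqP Hx.
  by move=> _; exists [::], x, h; split.
move=> /IH [h1 [y [h2 [E Hy H1]]]].
exists (x :: h1), y, h2; split=> //; first by rewrite E.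
by rewrite /owned /=; case: ifP => // /eqP.
Qed.

Lemma owned_infosets_uniq I h : node (I, h) ->
  uniq (I :: map fst (owned (owner I) h)).
Proof.
move: {2}(size h).+1 (ltnSn (size h)) => n; elim: n I h => [//|n IHn] I h Hs Hn.
case E0: (owned (owner I) h) => [|y s]; first by [].
have /last_owned [h1 [[J b] [h2 [E HJ H2]]]] : owned (owner I) h != [::] by rewrite E0.
have HnJ : node (J, h1) by apply: (dnodes_prefix Hn); exact: E.
have Hs1 : (size h1 < n)%N by move: Hs; rewrite E size_cat /=; lia.
have IH := IHn J h1 Hs1 HnJ.
rewrite -E0 E owned_cat owned_cons // H2 -HJ cats1 map_rcons /=.
rewrite /= in IH; rewrite /= rcons_uniq IH andbT.
rewrite mem_rcons in_cons negb_or; apply/andP; split.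
  by apply/eqP => EJ; subst J; exact: (no_revisit Hn E).
apply/negP => /mapP [[I' b'] /=]; rewrite mem_filter => /andP [_ Hm] EI.
subst I'; have := infoset_not_revisited b' Hn; rewrite E mem_cat Hm //.
Qed.

(* Hence the owner of I has fewer than #|Info| decisions above I: this is
   the fuel bound needed for [V]. *)
Lemma owned_depth I h : node (I, h) -> (size (owned (owner I) h) < #|Info|)%N.
Proof.
move=> /owned_infosets_uniq /card_uniqP E.
by have := max_card (mem (I :: map fst (owned (owner I) h))); rewrite E /= size_map.
Qed.

Section PlayerPlans.
Variable (i : Player).
Implicit Types (f : {ffun infos owner i -> Act}) (z : lf).

Lemma ownerP (J : infos owner i) : owner (val J) = i.
Proof. exact: eqP (valP J). Qed.

Lemma consistentP f h : reflect (forall (J : infos owner i) b, (val J, b) \in h -> f J = b)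
  (consistent f h).
Proof.
apply: (iffP forallP) => [H J b Hm|H J].
  by move: (H J) => /forallP /(_ b) /implyP /(_ Hm) /eqP.
by apply/forallP => b; apply/implyP => Hm; apply/eqP; exact: H.
Qed.

Lemma consistent_cat f h1 h2 :
  consistent f (h1 ++ h2) = consistent f h1 && consistent f h2.
Proof.
apply/consistentP/andP => [H|[/consistentP H1 /consistentP H2]].
  by split; apply/consistentP => J b Hm; apply: H; rewrite mem_cat Hm ?orbT.
by move=> J b; rewrite mem_cat => /orP [/H1|/H2].
Qed.

Lemma consistent_owned f h : consistent f h = consistent f (owned i h).
Proof.
by apply/consistentP/consistentP => H J b Hm; apply: H; move: Hm;
  rewrite mem_filter /= ownerP eqxx.
Qed.

Lemma consistent_nil f : consistent f [::].
Proof. by apply/consistentP. Qed.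

Lemma consistent_cons f (J : infos owner i) b h :
  consistent f ((val J, b) :: h) = (f J == b) && consistent f h.
Proof.
apply/consistentP/andP => [H|[/eqP H1 /consistentP H2]].
  split; first by apply/eqP; apply: H; rewrite mem_head.
  by apply/consistentP => J' b' Hm; apply: H; rewrite in_cons Hm orbT.
move=> J' b'; rewrite in_cons => /orP [/eqP [/val_inj -> ->] //|]; exact: H2.
Qed.

Lemma owned_nilP h : reflect (owned i h = [::]) (all (fun r => owner r.1 != i) h).
Proof.
elim: h => [|x h IH] /=; first by constructor.
by rewrite /owned /=; case: eqP => Hx /=; [constructor|exact: IH].
Qed.

Lemma inZP I z : inZ I z -> exists h1 a h2, hist z = h1 ++ (I, a) :: h2.
Proof.
case/hasP => [[I' a] /mem_splitP [h1 [h2 E]] /= /eqP EI]; subst I'.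
by exists h1, a, h2.
Qed.

Lemma inZa_inZ I a z : inZa I a z -> inZ I z.
Proof. by move=> H; apply/hasP; exists (I, a). Qed.

Lemma PiI_of_leaf (I : infos owner i) f z : List.In z (leaves t) ->
  inZ (val I) z -> Piz f z -> PiI t f I.
Proof.
move=> Hz /inZP [h1 [a [h2 E]]] Hc.
have Hnode : node (val I, h1) by apply: (leaves_prefix Hz); exact: E.
apply/allP => -[I' h] Hn; apply/implyP => /eqP /= E1; subst I'.
have := recall Hnode ((In_mem _ _).1 Hn); rewrite ownerP => Ho.
rewrite consistent_owned -Ho -consistent_owned.
by move: Hc; rewrite /Piz E consistent_cat => /andP [].
Qed.

Lemma inZa_of_consistent (I : infos owner i) f z : inZ (val I) z -> Piz f z ->
  inZa (val I) (f I) z.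
Proof.
move=> /inZP [h1 [a [h2 E]]] /consistentP H.
have Hm : (val I, a) \in hist z by rewrite E mem_cat mem_head orbT.
by rewrite /inZa (H _ _ Hm).
Qed.

Lemma direct_afterP I a h : direct_after owner i I a h ->
  exists h1 h2, h = h1 ++ (I, a) :: h2 /\ owned i h2 = [::].
Proof.
elim: h => [|q h IH] //= /orP [/andP [/eqP -> /owned_nilP H]|/IH [h1 [h2 [E H]]]].
  by exists [::], h.
by exists (q :: h1), h2; rewrite E.
Qed.

Lemma direct_after_intro I a h1 h2 : owned i h2 = [::] ->
  direct_after owner i I a (h1 ++ (I, a) :: h2).
Proof.
move=> /owned_nilP H; elim: h1 => [|q h1 IH] /=; first by rewrite eqxx H.
by rewrite IH orbT.
Qed.

Lemma inC_witness (I J : infos owner i) a : inC t I a J ->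
  exists p hw, [/\ node (val J, p ++ (val I, a) :: hw), owned i hw = [::]
                 & node (val I, p)].
Proof.
case/hasP => -[J' h] /= /In_mem Hn /andP [/eqP E /direct_afterP [p [hw [Eh Hhw]]]].
subst J' h; exists p, hw; split=> //; apply: (dnodes_prefix Hn); reflexivity.
Qed.

(* By perfect recall, player i's history at any node of J in C(I,a) is
   her history at I extended by (I,a). *)
Lemma owned_C (I J : infos owner i) a p hJ : inC t I a J -> node (val I, p) ->
  node (val J, hJ) -> owned i hJ = rcons (owned i p) (val I, a).
Proof.
case/inC_witness => p' [hw [Hw Hhw Hp']] Hp HJ.
have := recall HJ Hw; rewrite ownerP => ->.
rewrite owned_cat owned_cons /= ?ownerP // Hhw -cats1.
by have := recall Hp' Hp; rewrite ownerP => ->.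
Qed.

Lemma C_inZa (I J : infos owner i) a z : inC t I a J -> List.In z (leaves t) ->
  inZ (val J) z -> inZa (val I) a z.
Proof.
move=> HC Hz /inZP [g1 [b [g2 E]]].
have Hg1 : node (val J, g1) by apply: (leaves_prefix Hz); exact: E.
case/inC_witness: (HC) => p [hw [_ _ Hp]].
have : (val I, a) \in owned i g1 by rewrite (owned_C HC Hp Hg1) mem_rcons mem_head.
by rewrite mem_filter => /andP [_ Hm]; rewrite /inZa E mem_cat Hm.
Qed.

Lemma C_disjoint (I J1 J2 : infos owner i) a z : inC t I a J1 -> inC t I a J2 ->
  List.In z (leaves t) -> inZ (val J1) z -> inZ (val J2) z -> J1 = J2.
Proof.
move=> HC1 HC2 Hz /inZP [g1 [b1 [r1 E1]]] /inZP [g2 [b2 [r2 E2]]].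
have Hg1 : node (val J1, g1) by apply: (leaves_prefix Hz); exact: E1.
have Hg2 : node (val J2, g2) by apply: (leaves_prefix Hz); exact: E2.
case/inC_witness: (HC1) => p [hw [_ _ Hp]].
have O1 := owned_C HC1 Hp Hg1; have O2 := owned_C HC2 Hp Hg2.
have E : g1 ++ (val J1, b1) :: r1 = g2 ++ (val J2, b2) :: r2 by rewrite -E1 -E2.
have longer (J : infos owner i) b g m : owned i (g ++ (val J, b) :: m) <> owned i g.
  by rewrite owned_cat owned_cons ?ownerP // => /(congr1 size); rewrite size_cat /=; lia.
case: (ltngtP (size g1) (size g2)) => Hs.
- case: (cat_cons_lt E Hs) => m Em; apply: False_ind (longer J1 b1 g1 m _).
  by rewrite -Em O1 O2.
- case: (cat_cons_lt (esym E) Hs) => m Em; apply: False_ind (longer J2 b2 g2 m _).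
  by rewrite -Em O1 O2.
- by have [/val_inj] := cat_cons_eq E Hs.
Qed.

Lemma PiI_C f (I J : infos owner i) : PiI t f I -> inC t I (f I) J -> PiI t f J.
Proof.
move=> HP HC; case/inC_witness: (HC) => p [hw [_ _ Hp]].
apply/allP => -[J' h] Hn; apply/implyP => /eqP /= E1; subst J'.
rewrite consistent_owned (owned_C HC Hp ((In_mem _ _).1 Hn)) -cats1 consistent_cat.
rewrite [consistent f [:: _]]consistent_cons eqxx consistent_nil andbT -consistent_owned.
by move/allP: HP => /(_ _ ((In_mem _ _).2 Hp)); rewrite /= eqxx andbT.
Qed.

(* A leaf below (I,f(I)) but below no J in C(I,f(I)) is reached by f when f
   follows the path to I: no decision of player i separates it from I. *)
Lemma reach_immediate f (I : infos owner i) z : List.In z (leaves t) -> PiI t f I ->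
  inZa (val I) (f I) z ->
  ~~ [exists J, inC t I (f I) J && inZ (val J) z] -> Piz f z.
Proof.
move=> Hz HP /mem_splitP [h1 [h2 E]] Hno.
have Hn1 : node (val I, h1) by apply: (leaves_prefix Hz); exact: E.
rewrite /Piz E consistent_cat consistent_cons eqxx /=; apply/andP; split.
  by move/allP: HP => /(_ _ ((In_mem _ _).2 Hn1)); rewrite /= eqxx.
rewrite consistent_owned; case E2 : (owned i h2) => [|y s]; first exact: consistent_nil.
have /first_owned [m1 [[J' b'] [m2 [Em HJ' Hm1]]]] : owned i h2 != [::] by rewrite E2.
case/negP: Hno; apply/existsP; exists (Sub J' (introT eqP HJ')); apply/andP; split.
  apply/hasP; exists (J', h1 ++ (val I, f I) :: m1).
    by apply/In_mem/(leaves_prefix Hz (a := b') (h2 := m2)); rewrite E Em -catA.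
  by rewrite /= eqxx /=; apply: direct_after_intro.
by apply/hasP; exists (J', b') => //; rewrite E Em mem_cat in_cons mem_cat mem_head !orbT.
Qed.

Definition leaf_payoff (pt : jplan A) z : R := (Pimiz owner i pt z)%:R * pc z * pay z i.

Definition Vleaf (pt : jplan A) (I : infos owner i) f : R :=
  \sum_(z <- leaves t | inZ (val I) z && Piz f z) leaf_payoff pt z.

(* [Vleaf] satisfies the recursion defining V: a reached leaf below I is
   either immediate (below no J in C(I,f(I))) or below exactly one such J. *)
Lemma Vleaf_recursion pt (I : infos owner i) f : PiI t f I ->
  Vleaf pt I f = uimm t pt I (f I) + \sum_(J | inC t I (f I) J) Vleaf pt J f.
Proof.
move=> HP; rewrite /Vleaf /uimm -/(leaf_payoff pt _).
under [X in _ = _ + X]eq_bigr do rewrite big_mkcond.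
rewrite exchange_big /= big_mkcond [X in _ = X + _]big_mkcond -big_split /=.
apply: eq_big_In => z Hz.
case: (boolP [exists J, inC t I (f I) J && inZ (val J) z]) => HE.
- case/existsP: (HE) => J0 /andP [HC0 HZ0].
  rewrite andbF add0r (bigD1 J0) //= HZ0 /= big1 ?addr0.
    by rewrite (inZa_inZ (C_inZa HC0 Hz HZ0)).
  move=> J /andP [HC HneJ]; case: ifP => // /andP [HZ _].
  by move: HneJ; rewrite (C_disjoint HC HC0 Hz HZ HZ0) eqxx.
- rewrite andbT big1 ?addr0; last first.
    move=> J HC; case: ifP => // /andP [HZ _]; case/negP: HE.
    by apply/existsP; exists J; rewrite HC HZ.
  case: (boolP (inZa (val I) (f I) z)) => Ha.
    by rewrite (inZa_inZ Ha) (reach_immediate Hz HP Ha HE).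
  case: ifP => // /andP [HZ HPz]; case/negP: Ha.
  exact: inZa_of_consistent.
Qed.

(* Enough fuel: below a node of I with owned history h the recursion has
   depth at most #|Info| - |h|. *)
Lemma Vfuel_Vleaf pt f n (I : infos owner i) h : PiI t f I -> node (val I, h) ->
  (#|Info| <= n + size (owned i h))%N -> Vfuel t n pt I f = Vleaf pt I f.
Proof.
elim: n I h => [|n IH] I h HP Hn Hs.
  by have := owned_depth Hn; rewrite ownerP; lia.
rewrite /= Vleaf_recursion //; congr (_ + _); apply: eq_bigr => J HC.
case/inC_witness: (HC) => p [hw [HJ Hhw Hp]].
apply: (IH J _ (PiI_C HP HC) HJ).
rewrite (owned_C HC Hp HJ) size_rcons.
by have := recall Hp Hn; rewrite ownerP => ->; lia.
Qed.

Lemma V_leaf_sum pt f (I : infos owner i) : PiI t f I -> V t pt I f = Vleaf pt I f.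
Proof.
move=> HP; case/hasP: (Hne (val I)) => -[I' h] /In_mem Hn /= /eqP E; subst I'.
by rewrite /V; apply: (Vfuel_Vleaf pt HP Hn); lia.
Qed.

(* Pi_i(I) is nonempty: follow the (unique, by perfect recall) actions of
   player i on a path to I, and any legal action elsewhere. *)
Lemma PiI_nonempty (I : infos owner i) : exists g : iplan owner A i, PiI t (val g) I.
Proof.
case/hasP: (Hne (val I)) => -[I' h0] /In_mem Hn0 /= /eqP E; subst I'.
have Hu : uniq (map fst (owned i h0)).
  by have := owned_infosets_uniq Hn0; rewrite ownerP /= => /andP [].
have Hch : forall J : infos owner i, exists b,
    b \in A (val J) /\ forall b', (val J, b') \in h0 -> b = b'.
  move=> J; case: (boolP (has (fun q => q.1 == val J) h0)).
  - case/hasP => -[J' b] Hm /= /eqP EJ; subst J'.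
    exists b; split; first by apply: (dnodes_actions Hwf Hn0); rewrite /= -In_mem.
    by move=> b' Hm'; apply: (uniq_fst (x := val J) Hu); rewrite mem_filter /= ownerP eqxx.
  - move=> Hnh; case/set0Pn: (HA (val J)) => b Hb; exists b; split=> // b' Hm.
    by case/negP: Hnh; apply/hasP; exists (val J, b').
have [u Pu] := fin_all_exists Hch.
have Hg : [forall J, [ffun J => u J] J \in A (val J)].
  by apply/forallP => J; rewrite ffunE; case: (Pu J).
exists (exist _ [ffun J => u J] Hg) => /=.
apply/allP => -[I' h] Hn; apply/implyP => /eqP /= E1; subst I'.
have := recall ((In_mem _ _).1 Hn) Hn0; rewrite ownerP => Ho.
rewrite consistent_owned Ho -consistent_owned.
by apply/consistentP => J b Hm; rewrite ffunE; case: (Pu J) => _; exact.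
Qed.

Section EmpiricalPlay.
Variables (T : nat) (pi : 'I_T -> jplan A).

Lemma sum_empfreq (P : pred (jplan A)) :
  \sum_(p | P p) empfreq R pi p = (\sum_(s < T) (P (pi s))%:R) / T%:R.
Proof.
rewrite /empfreq; under eq_bigr do rewrite ffunE; rewrite -mulr_suml; congr (_ * _).
symmetry; transitivity (\sum_(s < T | P (pi s)) (1 : R)).
  by rewrite [RHS]big_mkcond; apply: eq_bigr => s _; case: (P (pi s)).
rewrite (partition_big pi P) //=; apply: eq_bigr => p Pp.
rewrite -sum1_card natr_sum; apply: eq_bigl => s; apply/idP/idP.
  by case/andP => _ /eqP E; rewrite classical_sets.in_setE /= E.
by rewrite classical_sets.in_setE /= => /eqP E; rewrite E Pp eqxx.
Qed.

Lemma Pijz_split (p : jplan A) z :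
  Pijz p z = Pimiz owner i p z && Piz (restr owner i p) z.
Proof.
apply/forallP/andP => [H|[/forallP H1 /consistentP H2] J].
  split.
    apply/forallP => J; apply/forallP => b; apply/implyP => /andP [_ Hm].
    by move/forallP: (H J) => /(_ b) /implyP /(_ Hm).
  apply/consistentP => J b Hm; rewrite ffunE.
  by apply/eqP; move/forallP: (H (val J)) => /(_ b) /implyP /(_ Hm).
apply/forallP => b; apply/implyP => Hm.
case: (eqVneq (owner J) i) => HJ.
  by have := H2 (Sub J (introT eqP HJ)) b Hm; rewrite ffunE /= => ->.
by move/forallP: (H1 J) => /(_ b) /implyP; apply; rewrite HJ.
Qed.

Lemma deviation_payoff_empfreq (I : infos owner i) a (mh : {ffun iplan owner A i -> R}) :
  \sum_(z <- leaves t | inZ (val I) z) p_sig t (empfreq R pi) I a mh z * pay z i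
  = T%:R^-1 * \sum_(s < T) (Pisig t (restr owner i (pi s)) I a)%:R *
      \sum_g mh g * Vleaf (pi s) I (val g).
Proof.
pose G (s : 'I_T) (g : iplan owner A i) z : R :=
  T%:R^-1 * (inZ (val I) z)%:R * (Pisig t (restr owner i (pi s)) I a)%:R *
  (Piz (val g) z)%:R * mh g * leaf_payoff (pi s) z.
transitivity (\sum_(z <- leaves t) \sum_(s < T) \sum_g G s g z).
  rewrite big_indicator; apply: eq_bigr => z _; rewrite /p_sig sum_empfreq.
  have -> : \sum_(g | Piz (val g) z) mh g = \sum_g (Piz (val g) z)%:R * mh g.
    exact: big_indicator.
  set X := \sum_(s < T) (_ && _)%:R; set Y := \sum_g (Piz _ _)%:R * _.
  transitivity ((X * Y) * (T%:R^-1 * (inZ (val I) z)%:R * pc z * pay z i)).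
    by ring.
  rewrite -mulrA mulr_suml; apply: eq_bigr => s _.
  rewrite mulr_suml mulr_sumr; apply: eq_bigr => g _.
  by rewrite /G /leaf_payoff natr_andb; ring.
rewrite exchange_big mulr_sumr; apply: eq_bigr => s _.
rewrite exchange_big mulrA mulr_sumr; apply: eq_bigr => g _.
rewrite /Vleaf [X in _ = _ * (_ * X)]big_indicator !mulr_sumr; apply: eq_bigr => z _.
by rewrite /G natr_andb; ring.
Qed.

Lemma inZa_reached (I : infos owner i) a f z : List.In z (leaves t) ->
  inZa (val I) a z && Piz f z = Pisig t f I a && inZ (val I) z && Piz f z.
Proof.
move=> Hz; case Hp: (Piz f z); rewrite ?andbF // !andbT.
apply/idP/idP => [Ha|/andP [/andP [_ /eqP <-] HZ]]; last exact: inZa_of_consistent.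
have HZ := inZa_inZ Ha; rewrite HZ andbT /Pisig (PiI_of_leaf Hz HZ Hp) /=.
by move/consistentP: Hp => /(_ I a Ha) ->.
Qed.

Lemma realized_payoff_empfreq (I : infos owner i) a :
  \sum_(z <- leaves t | inZa (val I) a z) q_mu (empfreq R pi) z * pay z i
  = T%:R^-1 * \sum_(s < T) (Pisig t (restr owner i (pi s)) I a)%:R *
      Vleaf (pi s) I (restr owner i (pi s)).
Proof.
pose H (s : 'I_T) z : R :=
  T%:R^-1 * (inZa (val I) a z)%:R * (Pijz (pi s) z)%:R * pc z * pay z i.
transitivity (\sum_(z <- leaves t) \sum_(s < T) H s z).
  rewrite big_indicator; apply: eq_bigr => z _; rewrite /q_mu sum_empfreq.
  set X := \sum_(s < T) _.
  transitivity (X * (T%:R^-1 * (inZa (val I) a z)%:R * pc z * pay z i)); first by ring.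
  by rewrite mulr_suml; apply: eq_bigr => s _; rewrite /H; ring.
rewrite exchange_big mulr_sumr; apply: eq_bigr => s _.
rewrite /Vleaf [X in _ = _ * (_ * X)]big_indicator !mulr_sumr.
apply: eq_big_In => z Hz; rewrite /H /leaf_payoff Pijz_split !natr_andb.
have := congr1 (fun b : bool => b%:R : R) (inZa_reached I a (restr owner i (pi s)) Hz).
rewrite /= !natr_andb => E.
transitivity (T%:R^-1 * ((inZa (val I) a z)%:R * (Piz (restr owner i (pi s)) z)%:R) *
  (Pimiz owner i (pi s) z)%:R * pc z * pay z i); first by ring.
by rewrite E; ring.
Qed.

Definition trigger_gain (I : infos owner i) a (g : {ffun infos owner i -> Act}) : R :=
  \sum_(s < T) (Pisig t (restr owner i (pi s)) I a)%:R *
    (V t (pi s) I g - V t (pi s) I (restr owner i (pi s))).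

Lemma deviation_empfreq (I : infos owner i) a (mh : {ffun iplan owner A i -> R}) :
  is_idist t I mh ->
  deviation t (empfreq R pi) I a mh = T%:R^-1 * \sum_g mh g * trigger_gain I a (val g).
Proof.
move=> [[_ Hsum] Hsupp].
rewrite /deviation deviation_payoff_empfreq realized_payoff_empfreq -mulrBr.
congr (_ * _); rewrite -sumrB.
under [RHS]eq_bigr do rewrite /trigger_gain mulr_sumr.
rewrite [RHS]exchange_big; apply: eq_bigr => s _.
set Ps := (Pisig t (restr owner i (pi s)) I a)%:R.
set Vs := Vleaf (pi s) I (restr owner i (pi s)).
have mh_avg : Ps * (\sum_g mh g * Vleaf (pi s) I (val g)) - Ps * Vs =
    \sum_g mh g * (Ps * (Vleaf (pi s) I (val g) - Vs)).
  transitivity (Ps * (\sum_g mh g * Vleaf (pi s) I (val g)) - Ps * Vs * \sum_g mh g).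
    by rewrite Hsum mulr1.
  rewrite [Ps * _]mulr_sumr [_ * \sum_g mh g]mulr_sumr -sumrB.
  by apply: eq_bigr => g _; ring.
rewrite mh_avg; apply: eq_bigr => g _.
case: (eqVneq (mh g) 0) => [->|Hg]; first by rewrite !mul0r.
rewrite (V_leaf_sum _ (Hsupp g Hg)) /Ps /Vs.
case HPs: (Pisig t (restr owner i (pi s)) I a); last by rewrite !mul0r.
by case/andP: HPs => HP _; rewrite (V_leaf_sum _ HP).
Qed.

Lemma regret_attained (I : infos owner i) a : exists gs : iplan owner A i,
  [/\ PiI t (val gs) I, regret t pi I a = trigger_gain I a (val gs)
    & forall g : iplan owner A i, PiI t (val g) I ->
        trigger_gain I a (val g) <= trigger_gain I a (val gs)].
Proof.
have [g0 Hg0] := PiI_nonempty I.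
case: (@arg_maxP _ _ _ g0 (fun g : iplan owner A i => PiI t (val g) I)
  (fun g => trigger_gain I a (val g)) Hg0) => gs Hgs Hmax.
exists gs; split=> //; apply: sup_eq_max; first by exists gs.
by move=> y [g [Hg ->]]; apply: Hmax.
Qed.

Lemma deviation_le_regret (I : infos owner i) a (mh : {ffun iplan owner A i -> R}) :
  is_idist t I mh -> deviation t (empfreq R pi) I a mh <= regret t pi I a / T%:R.
Proof.
move=> Hid; rewrite (deviation_empfreq a Hid) mulrC.
have [gs [Hgs -> Hmax]] := regret_attained I a.
apply: ler_wpM2r; first by rewrite invr_ge0 ler0n.
case: Hid => [[Hpos Hsum] Hsupp].
rewrite -[leRHS]mul1r -Hsum mulr_suml; apply: ler_sum => g _.
case: (eqVneq (mh g) 0) => [->|Hg]; first by rewrite !mul0r.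
by apply: ler_wpM2l => //; apply: Hmax; apply: Hsupp.
Qed.

Lemma deviation_attains_regret (I : infos owner i) a :
  exists mh : {ffun iplan owner A i -> R},
    is_idist t I mh /\ deviation t (empfreq R pi) I a mh = regret t pi I a / T%:R.
Proof.
have [gs [Hgs -> _]] := regret_attained I a.
pose mh : {ffun iplan owner A i -> R} := [ffun g => (g == gs)%:R].
have mh_gs (F : iplan owner A i -> R) : \sum_g mh g * F g = F gs.
  rewrite (bigD1 gs) //= ffunE eqxx mul1r big1 ?addr0 // => g /negbTE.
  by rewrite ffunE => ->; rewrite mul0r.
have Hid : is_idist t I mh.
  split; first split.
  - by move=> g; rewrite ffunE ler0n.
  - by have := mh_gs (fun=> 1); under eq_bigr do rewrite mulr1.
  - by move=> g; rewrite ffunE; case: (eqVneq g gs) => [-> //|_]; rewrite eqxx.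
by exists mh; split=> //; rewrite (deviation_empfreq a Hid) mh_gs mulrC.
Qed.
End EmpiricalPlay.
End PlayerPlans.
End PerfectRecallGame.

Lemma max_avg_regret_cases (R : realType) (Player Info Act : finType)
    (owner : Info -> Player) (A : Info -> {set Act}) (t : gtree Player Info Act R)
    (T : nat) (pi : 'I_T -> jplan A) :
  (forall i (I : infos owner i) a, a \notin A (val I)) \/
  exists i (I : infos owner i) a,
    [/\ a \in A (val I), max_avg_regret owner t pi = regret t pi I a / T%:R
      & forall j (J : infos owner j) b, b \in A (val J) ->
          regret t pi J b / T%:R <= max_avg_regret owner t pi].
Proof.
pose P (x : {i : Player & infos owner i} * Act) := x.2 \in A (val (tagged x.1)).
pose F (x : {i : Player & infos owner i} * Act) := regret t pi (tagged x.1) x.2 / T%:R.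
case: (pickP P) => [x0 Px0|noP]; [right|left]; last first.
  by move=> i I a; apply/negP => Ha; have := noP (Tagged _ I, a); rewrite /P /= Ha.
case: (@arg_maxP _ _ _ x0 P F Px0) => xm Pxm Hmax.
have eps_max : max_avg_regret owner t pi = F xm.
  apply: sup_eq_max; first by exists (tag xm.1), (tagged xm.1), xm.2.
  by move=> y [i [I [a [Ha ->]]]]; exact: (Hmax (Tagged _ I, a) Ha).
exists (tag xm.1), (tagged xm.1), xm.2; rewrite eps_max; split=> // j J b Hb.
exact: (Hmax (Tagged _ J, b) Hb).
Qed.

Unset Implicit Arguments.

Theorem theorem1 (R : realType) (Player Info Act : finType)
  (owner : Info -> Player) (A : Info -> {set Act})
  (t : gtree Player Info Act R)
  (HA : forall I, A I != set0)
  (Hwf : wf_tree A t)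
  (Hne : infosets_nonempty t)
  (Hpr : perfect_recall owner t)
  (T : nat) (HT : (0 < T)%N) (pi : 'I_T -> jplan A) :
  let eps := max_avg_regret owner t pi in
  delta owner t (empfreq R pi) = eps /\
  (forall (i : Player) (I : infos owner i) (a : Act)
          (mh : {ffun iplan owner A i -> R}),
     a \in A (val I) -> is_idist t I mh ->
     \sum_(z <- leaves t | inZa (val I) a z) q_mu (empfreq R pi) z * pay z i
     >= \sum_(z <- leaves t | inZ (val I) z) p_sig t (empfreq R pi) I a mh z * pay z i
        - eps).
Proof.
move=> eps.
case: (max_avg_regret_cases owner t pi) => [no_trigger|[i0 [I0 [a0 [Ha0 eps_max eps_ub]]]]].
  (* no trigger sequence: both suprema range over the empty set *)
  split=> [|i I a mh]; last by rewrite (negbTE (no_trigger i I a)).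
  rewrite /delta /eps /max_avg_regret; congr sup.
  apply/boolp.funext => x; apply/boolp.propext.
  by split=> [[i [I [a [mh [Ha _ _]]]]]|[i [I [a [Ha _]]]]];
    rewrite (negbTE (no_trigger i I a)) in Ha.
have dev_le_eps i (I : infos owner i) a mh : a \in A (val I) -> is_idist t I mh ->
    deviation t (empfreq R pi) I a mh <= eps.
  move=> Ha Hid; apply: le_trans (eps_ub _ _ _ Ha).
  exact: (deviation_le_regret HA Hwf Hne Hpr pi a Hid).
split=> [|i I a mh Ha Hid].
- apply: sup_eq_max => [|y [i [I [a [mh [Ha Hid ->]]]]]]; last exact: dev_le_eps.
  have [mh [Hid Hdev]] := deviation_attains_regret HA Hwf Hne Hpr pi I0 a0.
  by exists i0, I0, a0, mh; split=> //; rewrite Hdev; exact: eps_max.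
- by have := dev_le_eps i I a mh Ha Hid; rewrite /deviation; lra.
Qed.
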